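(* Let $p$ be a prime. Then $\mathcal{M}_p^{(0)}=\{n\in\{1,2,6,42,1806\} : p\equiv 1\pmod{n}\}$.
   Context: For positive integers $k,n$ let $S_k(n)=\sum_{i=1}^{n} i^k$. For an integer $a$, $\mathcal{M}_a$ denotes the set of positive integers $n$ such that $S_n(n)\equiv a\pmod{n}$ (it is known that $\mathcal{M}_1=\{1,2,6,42,1806\}$). For a prime $p$, $\mathcal{M}_p^{(0)}=\{n\in\mathcal{M}_p : p\nmid n\}$. *)

From mathcomp Require Import all_boot.
Set Implicit Arguments. Unset Strict Implicit. Unset Printing Implicit Defensive.

Definition S (k n : nat) : nat := \sum_(1 <= i < n.+1) i ^ k.

(* M_a for a natural number a (the integer a is nonnegative here): positive n
   with S_n(n) = a (mod n). *)
Definition inM (a n : nat) : bool := (0 < n) && (S n n == a %[mod n]).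

Definition inM0 (p n : nat) : bool := inM p n && ~~ (p %| n).

(* For a prime q dividing n and k > 0, the sum S_k(n) consists of n/q copies
   of the power sum of F_q, which is -1 when (q - 1) | k and 0 otherwise; so
   S_k(n) = -(n/q) or 0 (mod q).  If n is in M_p^(0), then S_n(n) = p is
   nonzero mod every prime factor q of n, which forces (q - 1) | n and
   q^2 not dividing n.  A squarefree n all of whose prime factors q satisfy
   (q - 1) | n divides 1806 (by strong induction, every such q divides 1806)
   and is then one of 1, 2, 6, 42, 1806.  For these n every prime factor r
   satisfies r | n/r + 1, hence S_n(n) = 1 (mod n), and the two inclusions
   follow. *)

From mathcomp Require Import all_boot all_algebra all_fingroup all_solvable all_field.
Set Implicit Arguments.
Unset Strict Implicit.
Unset Printing Implicit Defensive.

Import GRing.Theory FinRing.Theory.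

Section FinFieldPowerSums.
Local Open Scope ring_scope.
Variable F : finFieldType.

Lemma natr_card_finField : #|F|%:R = 0 :> F.
Proof.
by rewrite -zmodXgE -cardsT; apply: (expg_cardG (G := [set: F]%G)); rewrite inE.
Qed.

Lemma expf_card_pred (a : F) : a != 0 -> a ^+ #|F|.-1 = 1.
Proof.
move=> a0; apply: (mulIf a0); rewrite mul1r -exprSr.
by rewrite prednK ?expf_card // (ltn_trans _ (finNzRing_gt1 F)).
Qed.

Lemma exists_expf_neq1 k : ~~ (#|F|.-1 %| k)%N -> exists2 a : F, a != 0 & a ^+ k != 1.
Proof.
(* otherwise X^(k mod (#|F| - 1)) - 1 would have #|F| - 1 roots *)
move=> ndvd; apply/exists_inP; apply: contraNT ndvd => /exists_inPn allk.
set d := (k %% #|F|.-1)%N.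
have rootd (a : F) : a != 0 -> a ^+ d = 1.
  move=> a0; have /negPn/eqP := allk a a0.
  by rewrite {1}(divn_eq k #|F|.-1) exprD mulnC exprM expf_card_pred // expr1n mul1r.
rewrite /dvdn -/d; have card1 : (0 < #|F|.-1)%N by rewrite -subn1 subn_gt0 finNzRing_gt1.
apply: contraTT (ltn_pmod k card1) => d0.
rewrite -leqNgt -ltnS.
have := @max_poly_roots _ ('X^d - 1) (enum (predC1 (0 : F))).
rewrite size_XnsubC ?lt0n // -cardE cardC1; apply.
- by rewrite monic_neq0 ?monicXnsubC ?lt0n.
- by apply/allP => a; rewrite mem_enum => a0; rewrite rootE !hornerE rootd ?subrr.
- exact: enum_uniq.
Qed.

Lemma sum_expr_finField k : (0 < k)%N ->
  \sum_(a : F) a ^+ k = if (#|F|.-1 %| k)%N then -1 else 0.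
Proof.
move=> k0; case: ifP => [kd | /negbT ndvd].
  rewrite (bigD1 0) //= expr0n (gtn_eqF k0) add0r (eq_bigr (fun=> 1)) => [|a a0].
    apply/eqP; rewrite sumr_const cardC1 -addr_eq0 -(natrD _ _ 1) addn1.
    by rewrite prednK ?natr_card_finField // (ltn_trans _ (finNzRing_gt1 F)).
  by case/dvdnP: kd => t ->; rewrite mulnC exprM expf_card_pred ?expr1n.
have [a a0 ak] := exists_expf_neq1 ndvd.
have : \sum_(x : F) x ^+ k = a ^+ k * \sum_(x : F) x ^+ k.
  rewrite {1}(reindex_inj (mulfI a0)) mulr_sumr /=.
  by apply: eq_bigr => x _; rewrite exprMn.
move/eqP; rewrite -subr_eq0 -{1}[\sum_x _]mul1r -mulrBl mulf_eq0 subr_eq0 eq_sym.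
by rewrite (negbTE ak) => /eqP.
Qed.
End FinFieldPowerSums.

Section PrimeField.
Local Open Scope ring_scope.
Variables (q : nat) (q_pr : prime q).

Lemma natr_Fp_eq a b : ((a%:R : 'F_q) == b%:R) = (a == b %[mod q])%N.
Proof.
apply/eqP/eqP => [/(congr1 val)|ab]; first by rewrite /= !val_Fp_nat.
by rewrite -Fp_nat_mod // ab Fp_nat_mod.
Qed.

Lemma sum_Fp_natr {V : nmodType} (f : 'F_q -> V) :
  \sum_(0 <= i < q) f i%:R = \sum_(a : 'F_q) f a.
Proof.
by rewrite -{1}(Fp_cast q_pr) big_mkord; apply: eq_bigr => i _; rewrite natr_Zp.
Qed.

Lemma sum_Fp_natr_periodic {V : nmodType} (f : 'F_q -> V) m :
  \sum_(0 <= i < q * m) f i%:R = (\sum_(a : 'F_q) f a) *+ m.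
Proof.
elim: m => [|m IHm]; first by rewrite muln0 big_geq.
rewrite mulnS addnC (big_cat_nat _ (leq_addr _ _)) //= IHm.
rewrite -{1}[(q * m)%N]add0n big_addn addKn.
rewrite (eq_bigr (fun i => f i%:R)) => [|i _]; last first.
  by rewrite natrD natrM pchar_Fp_0 // mul0r addr0.
by rewrite sum_Fp_natr mulrSr.
Qed.

Lemma natr_S_Fp k n : (0 < k)%N -> (q %| n)%N ->
  (S k n)%:R = (if (q.-1 %| k)%N then - (n %/ q)%:R else 0) :> 'F_q.
Proof.
move=> k0 qn; have pchar_q := pchar_Fp q_pr.
(* the summation range 1..n can be shifted to 0..n-1 as 0^k = n^k = 0 in F_q *)
have shift : (S k n)%:R = \sum_(0 <= i < n) (i%:R : 'F_q) ^+ k.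
  have zero_k : (0%:R : 'F_q) ^+ k = 0 by rewrite expr0n gtn_eqF.
  have n_k : (n%:R : 'F_q) ^+ k = 0.
    by move: qn; rewrite (dvdn_pcharf pchar_q) => /eqP->; rewrite expr0n gtn_eqF.
  rewrite /S natr_sum (eq_bigr (fun i => (i%:R : 'F_q) ^+ k)) => [|i _]; last by rewrite natrX.
  rewrite big_add1 /= -[LHS]add0r -{1}zero_k.
  rewrite -(big_nat_recl n 0 (fun i => (i%:R : 'F_q) ^+ k)) //.
  by rewrite big_nat_recr //= n_k addr0.
rewrite shift -{1}(divnK qn) [(_ * q)%N]mulnC.
rewrite (sum_Fp_natr_periodic (fun a : 'F_q => a ^+ k)) sum_expr_finField // card_Fp //.
by case: ifP; rewrite ?mulNrn ?mul0rn // mulr1n.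
Qed.
End PrimeField.

Lemma S_gt0 k n : 0 < n -> 0 < S k n.
Proof. by move=> n0; rewrite /S big_ltn // exp1n. Qed.

Definition squarefree n := forall r, prime r -> ~~ (r * r %| n).

Lemma squarefree_dvdn m n : m %| n -> squarefree n -> squarefree m.
Proof. by move=> mn sqf_n r /sqf_n; apply: contra => /dvdn_trans->. Qed.

Lemma squarefree_gt0 n : squarefree n -> 0 < n.
Proof. by move=> sqf_n; rewrite lt0n; apply: contraNneq (sqf_n 2 isT) => ->. Qed.

Lemma squarefree_dvdnP m N : squarefree m ->
  reflect (forall r, prime r -> r %| m -> r %| N) (m %| N).
Proof.
move=> sqf_m; have m0 := squarefree_gt0 sqf_m.
apply: (iffP idP) => [mN r _ /dvdn_trans->// | primeN].
apply/dvdn_partP => // r; rewrite mem_primes => /and3P[r_pr _ rm].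
have log1 : logn r m = 1.
  apply/eqP; rewrite eqn_leq -pfactor_dvdn // rm andbT.
  by rewrite leqNgt -pfactor_dvdn // (negbTE (sqf_m r r_pr)).
by rewrite p_part log1 primeN.
Qed.

Notation M1 := [:: 1; 2; 6; 42; 1806].

Lemma prime_dvd_1806 q : prime q -> q.-1 %| 1806 -> q %| 1806.
Proof.
move=> q_pr; rewrite (dvdn_divisors _ (isT : 0 < 1806)) => qdiv.
have: all (fun d => prime d.+1 ==> (d.+1 %| 1806)) (divisors 1806) by vm_compute.
move/allP/(_ _ qdiv)/implyP.
by rewrite (prednK (prime_gt0 q_pr)); apply.
Qed.

Lemma divisor_1806_mem_M1 d : d %| 1806 ->
  (forall q, prime q -> q %| d -> q.-1 %| d) -> d \in M1.
Proof.
rewrite (dvdn_divisors _ (isT : 0 < 1806)) => ddiv pred_dvd.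
have: all (fun d => all (fun q => q.-1 %| d) (primes d) ==> (d \in M1)) (divisors 1806).
  by vm_compute.
move/allP/(_ _ ddiv)/implyP; apply; apply/allP => q.
by rewrite mem_primes => /and3P[q_pr _]; apply: pred_dvd.
Qed.

Lemma M1_gt0 n : n \in M1 -> 0 < n.
Proof. by move: n; apply/allP. Qed.

Lemma M1_prime_dvd n r : n \in M1 -> prime r -> r %| n ->
  [&& r.-1 %| n, ~~ (r * r %| n) & r %| n %/ r + 1].
Proof.
move=> nM1 r_pr rn.
have: all (fun n => all (fun r => [&& r.-1 %| n, ~~ (r * r %| n) & r %| n %/ r + 1]) (primes n)) M1.
  by vm_compute.
by move/allP/(_ _ nM1)/allP; apply; rewrite mem_primes r_pr M1_gt0.
Qed.

Lemma squarefree_pred_dvd_mem_M1 n : squarefree n ->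
  (forall q, prime q -> q %| n -> q.-1 %| n) -> n \in M1.
Proof.
move=> sqf_n pred_dvd.
have dvd1806 q : prime q -> q %| n -> q %| 1806.
  elim/ltn_ind: q => q IHq q_pr qn; apply: prime_dvd_1806 => //.
  (* the prime factors of q - 1 are smaller prime factors of n *)
  have q1_n := pred_dvd q q_pr qn.
  have q1_gt0 : 0 < q.-1 by rewrite -subn1 subn_gt0 prime_gt1.
  apply/squarefree_dvdnP => // [|r r_pr rq]; first exact: squarefree_dvdn q1_n sqf_n.
  apply: IHq (dvdn_trans rq q1_n) => //.
  by rewrite (leq_ltn_trans (dvdn_leq q1_gt0 rq)) // ltn_predL prime_gt0.
by apply: divisor_1806_mem_M1 => //; apply/squarefree_dvdnP.
Qed.

Lemma squarefree_M1 n : n \in M1 -> squarefree n.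
Proof.
move=> nM1 r r_pr; apply/negP => rrn.
have rn : r %| n := dvdn_trans (dvdn_mulr r (dvdnn r)) rrn.
by case/and3P: (M1_prime_dvd nM1 r_pr rn); rewrite rrn.
Qed.

Lemma S_M1 n : n \in M1 -> S n n = 1 %[mod n].
Proof.
move=> nM1; have n0 := M1_gt0 nM1.
apply/eqP; rewrite eqn_mod_dvd ?S_gt0 //.
apply/squarefree_dvdnP => [|r r_pr rn]; first exact: squarefree_M1.
case/and3P: (M1_prime_dvd nM1 r_pr rn) => r1_n _.
rewrite -eqn_mod_dvd ?S_gt0 // -(natr_Fp_eq r_pr) natr_S_Fp // r1_n.
by rewrite (dvdn_pcharf (pchar_Fp r_pr)) natrD addr_eq0 => /eqP->; rewrite opprK.
Qed.

Section InM0.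
Local Open Scope ring_scope.
Variables (p n : nat) (p_pr : prime p) (Mn : inM0 p n).

Lemma inM0_gt0 : (0 < n)%N.
Proof. by case/andP: Mn => /andP[]. Qed.

Lemma inM0_natr_S_neq0 q : prime q -> (q %| n)%N -> (S n n)%:R != 0 :> 'F_q.
Proof.
case/andP: Mn => /andP[_ /eqP Sp] pn q_pr qn.
have /eqP-> : (S n n)%:R == p%:R :> 'F_q.
  by rewrite (natr_Fp_eq q_pr) -(modn_dvdm _ qn) Sp modn_dvdm.
rewrite -(dvdn_pcharf (pchar_Fp q_pr)); apply: contra pn => qp.
by move: qp; rewrite dvdn_prime2 // => /eqP <-.
Qed.

Lemma inM0_pred_dvd q : prime q -> (q %| n)%N -> (q.-1 %| n)%N.
Proof.
move=> q_pr qn; have := inM0_natr_S_neq0 q_pr qn.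
by rewrite natr_S_Fp // ?inM0_gt0 //; case: ifP; rewrite ?eqxx.
Qed.

Lemma inM0_squarefree : squarefree n.
Proof.
move=> r r_pr; apply/negP => rrn.
have rn : (r %| n)%N := dvdn_trans (dvdn_mulr r (dvdnn r)) rrn.
have := inM0_natr_S_neq0 r_pr rn.
rewrite natr_S_Fp // ?inM0_gt0 // inM0_pred_dvd // oppr_eq0.
by rewrite -(dvdn_pcharf (pchar_Fp r_pr)) dvdn_divRL // rrn.
Qed.

End InM0.

Theorem mainTheorem3 (p : nat) : prime p ->
  forall n : nat,
    inM0 p n = (n \in [:: 1; 2; 6; 42; 1806]) && (p == 1 %[mod n]).
Proof.
move=> p_pr n; apply/idP/andP => [Mn | [nM1 /eqP p1]].
  have nM1 : n \in M1.
    apply: squarefree_pred_dvd_mem_M1 (inM0_squarefree p_pr Mn) _.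
    exact: inM0_pred_dvd p_pr Mn.
  by case/andP: Mn => /andP[_ /eqP <-] _; rewrite nM1 S_M1.
have p_ndvd_n : ~~ (p %| n).
  apply: contraL (prime_gt1 p_pr) => pn.
  have : p %% p = 1 %% p by rewrite -(modn_dvdm p pn) p1 modn_dvdm.
  by rewrite modnn => /esym/eqP; rewrite -/(p %| 1) dvdn1 => /eqP->.
by rewrite /inM0 /inM (M1_gt0 nM1) (S_M1 nM1) p1 eqxx p_ndvd_n.
Qed.
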